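(* Let $(S,\mathcal{E})$ be a qualitative evidence frame and let $\mathfrak{F}$ be a set of evidence allocation functions on $(S,\mathcal{E})$. Define $u:2^{\mathcal{E}}\to\tau_{\mathcal{E}}$ by $u(\mathbf{E})=\bigcup\mathbf{E}$ if $\mathbf{E}\neq\emptyset$ and $u(\emptyset)=S$. Then $\mathfrak{F}\cup\{u\}$ is a set of evidence allocation functions on $(S,\mathcal{E})$.
   Context: A qualitative evidence frame is a pair $(S,\mathcal{E})$ where $S$ is a finite nonempty set (of possible states) and $\mathcal{E}$ is a nonempty family of subsets of $S$ with $\emptyset\notin\mathcal{E}$ and $S\notin\mathcal{E}$. For any family $\mathbf{E}\subseteq 2^S$, $\tau_{\mathbf{E}}$ denotes the topology on $S$ generated by $\mathbf{E}$ (as a subbasis): it consists of $\emptyset$, $S$, all finite intersections of members of $\mathbf{E}$, and all arbitrary unions of such finite intersections. For $\mathbf{E}\subseteq\mathcal{E}$, an element $D\in\tau_{\mathbf{E}}$ is called dense in $\bigcup\mathbf{E}$ w.r.t. $\tau_{\mathbf{E}}$ if $D\cap T\neq\emptyset$ for every nonempty $T\in\tau_{\mathbf{E}}$. A set of evidence allocation functions on $(S,\mathcal{E})$ is a set $\mathfrak{F}$ of functions $2^{\mathcal{E}}\to\tau_{\mathcal{E}}$ such that for all $f,g\in\mathfrak{F}$: (1) $f(\emptyset)=S$; (2) for every nonempty $\mathbf{E}\subseteq\mathcal{E}$, either $f(\mathbf{E})=\emptyset$, or $f(\mathbf{E})\in\tau_{\mathbf{E}}$ and $f(\mathbf{E})$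 is dense in $\bigcup\mathbf{E}$ w.r.t. $\tau_{\mathbf{E}}$; (3) for every $\mathbf{E}\subseteq\mathcal{E}$, $f(\mathbf{E})\subseteq g(\mathbf{E})$ or $g(\mathbf{E})\subseteq f(\mathbf{E})$. *)

From mathcomp Require Import all_boot.
Set Implicit Arguments. Unset Strict Implicit. Unset Printing Implicit Defensive.

Definition qual_evidence_frame (S : finType) (E : {set {set S}}) : Prop :=
  (0 < #|S|)%N /\ E != set0 /\ set0 \notin E /\ [set: S] \notin E.

(* U is open iff U is
   empty, U is S, or U is a union of finite intersections of members of Es.
   (S finite: arbitrary unions are finite unions, indexed by a set F of
   finite subfamilies G of Es, each contributing \bigcap_(A in G) A.) *)
Definition tau (S : finType) (Es : {set {set S}}) (U : {set S}) : Prop :=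
  U = set0 \/ U = [set: S] \/
  exists F : {set {set {set S}}},
    (forall G : {set {set S}}, G \in F -> G != set0 /\ G \subset Es) /\
    U = \bigcup_(G in F) \bigcap_(A in G) A.

Definition dense_in (S : finType) (Es : {set {set S}}) (D : {set S}) : Prop :=
  tau Es D /\ forall T : {set S}, tau Es T -> T != set0 -> D :&: T != set0.

(* A set of evidence allocation functions on (S, E): a set Fs of functions
   2^E -> tau_E (represented as functions {set {set S}} -> {set S}, only
   their values on subfamilies of E are relevant). *)
Definition EAF_set (S : finType) (E : {set {set S}})
  (Fs : ({set {set S}} -> {set S}) -> Prop) : Prop :=
  forall f g, Fs f -> Fs g ->
    (forall Es : {set {set S}}, Es \subset E -> tau E (f Es)) /\
    f set0 = [set: S] /\
    (forall Es : {set {set S}}, Es \subset E -> Es != set0 ->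
        f Es = set0 \/ (tau Es (f Es) /\ dense_in Es (f Es))) /\
    (forall Es : {set {set S}}, Es \subset E -> f Es \subset g Es \/ g Es \subset f Es).

Definition u_fun (S : finType) (Es : {set {set S}}) : {set S} :=
  if Es == set0 then [set: S] else \bigcup_(A in Es) A.

From mathcomp Require Import all_boot.

Set Implicit Arguments.
Unset Strict Implicit.
Unset Printing Implicit Defensive.

(* Every set open in the topology generated by Es is either S or contained in
   cover Es, which is itself open.  Hence cover Es meets every nonempty open
   set, i.e. it is dense, and each value f(Es) of an allocation function (empty,
   S, or open for Es) is comparable with u(Es) = cover Es; at Es = set0 both
   values are S. *)

Definition evidence_allocation (S : finType) (E : {set {set S}})
    (f : {set {set S}} -> {set S}) : Prop :=
  (forall Es : {set {set S}}, Es \subset E -> tau E (f Es)) /\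
  f set0 = [set: S] /\
  (forall Es : {set {set S}}, Es \subset E -> Es != set0 ->
      f Es = set0 \/ (tau Es (f Es) /\ dense_in Es (f Es))).

Definition comparable_on (S : finType) (E : {set {set S}})
    (f g : {set {set S}} -> {set S}) : Prop :=
  forall Es : {set {set S}}, Es \subset E -> f Es \subset g Es \/ g Es \subset f Es.

Lemma EAF_setP (S : finType) (E : {set {set S}})
    (Fs : ({set {set S}} -> {set S}) -> Prop) :
  EAF_set E Fs <->
  (forall f, Fs f -> evidence_allocation E f) /\
  (forall f g, Fs f -> Fs g -> comparable_on E f g).
Proof.
split=> [H | [Fs_alloc Fs_cmp] f g Ff Fg].
  split=> [f Ff | f g Ff Fg].
    by have [? [? [? _]]] := H f f Ff Ff.
  by have [_ [_ [_ ?]]] := H f g Ff Fg.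
by have [? [? ?]] := Fs_alloc f Ff; have := Fs_cmp f g Ff Fg.
Qed.

Lemma comparable_on_refl (S : finType) (E : {set {set S}}) f :
  comparable_on E f f.
Proof. by move=> Es _; left. Qed.

Lemma comparable_on_sym (S : finType) (E : {set {set S}}) f g :
  comparable_on E f g -> comparable_on E g f.
Proof. by move=> fg Es /fg []; [right | left]. Qed.

Section GeneratedTopology.

Variables (S : finType) (Es : {set {set S}}).

Lemma tau_setT : tau Es [set: S].
Proof. by right; left. Qed.

Lemma tau_cover (E : {set {set S}}) : Es \subset E -> tau E (cover Es).
Proof.
move=> EsE; right; right; exists [set [set A] | A in Es]; split.
  move=> _ /imsetP [A EsA ->]; split; last by rewrite sub1set (subsetP EsE).
  by apply/set0Pn; exists A; rewrite inE.
rewrite big_imset /=; last by move=> A B _ _ /set1_inj.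
by apply: eq_bigr => A _; rewrite big_set1.
Qed.

Lemma tau_setT_or_sub_cover (U : {set S}) :
  tau Es U -> U = [set: S] \/ U \subset cover Es.
Proof.
case=> [->|[->|[F [F_fin ->]]]]; [by right; apply: sub0set | by left | right].
apply/bigcupsP => G /F_fin [/set0Pn [A GA] GEs].
exact: subset_trans (bigcap_inf _ GA) (bigcup_sup _ (subsetP GEs _ GA)).
Qed.

Lemma cover_neq0 : set0 \notin Es -> Es != set0 -> cover Es != set0.
Proof.
move=> Es_nempty /set0Pn [A EsA].
have /set0Pn [x Ax] : A != set0 by apply: contraNneq Es_nempty => <-.
by apply/set0Pn; exists x; apply/bigcupP; exists A.
Qed.

Lemma dense_in_cover : cover Es != set0 -> dense_in Es (cover Es).
Proof.
move=> cover_n0; split=> [|T /tau_setT_or_sub_cover [-> | TsubC] Tn0].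
- exact: tau_cover.
- by rewrite setIT.
- by rewrite (setIidPr TsubC).
Qed.

End GeneratedTopology.

Lemma u_fun0 (S : finType) : u_fun set0 = [set: S].
Proof. by rewrite /u_fun eqxx. Qed.

Lemma u_fun_cover (S : finType) (Es : {set {set S}}) :
  Es != set0 -> u_fun Es = cover Es.
Proof. by rewrite /u_fun => /negbTE ->. Qed.

Lemma u_fun_allocation (S : finType) (E : {set {set S}}) :
  set0 \notin E -> evidence_allocation E (@u_fun S).
Proof.
move=> E_nempty; split; [| split; [exact: u_fun0 |]].
  move=> Es EsE; have [-> | Es_n0] := eqVneq Es set0.
    by rewrite u_fun0; apply: tau_setT.
  by rewrite u_fun_cover //; apply: tau_cover.
move=> Es EsE Es_n0; right; rewrite u_fun_cover //.
have cover_n0 : cover Es != set0.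
  by apply: cover_neq0 Es_n0; apply: contra E_nempty; apply: (subsetP EsE).
by split; [apply: tau_cover | apply: dense_in_cover].
Qed.

Lemma comparable_on_u_fun (S : finType) (E : {set {set S}}) f :
  evidence_allocation E f -> comparable_on E f (@u_fun S).
Proof.
move=> [_ [f0 f_dense]] Es EsE.
have [-> | Es_n0] := eqVneq Es set0; first by left; rewrite f0 u_fun0.
rewrite u_fun_cover //.
case: (f_dense Es EsE Es_n0) => [-> | [/tau_setT_or_sub_cover [-> | ?] _]].
- by left; apply: sub0set.
- by right; apply: subsetT.
- by left.
Qed.

Theorem proposition2 (S : finType) (E : {set {set S}})
  (Fs : ({set {set S}} -> {set S}) -> Prop) :
  qual_evidence_frame E -> EAF_set E Fs ->
  EAF_set E (fun h => Fs h \/ h = @u_fun S).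
Proof.
move=> [_ [_ [E_nempty _]]] /EAF_setP [Fs_alloc Fs_cmp]; apply/EAF_setP; split.
  by move=> f [/Fs_alloc // | ->]; apply: u_fun_allocation.
move=> f g [Ff | ->] [Fg | ->].
- exact: Fs_cmp.
- exact/comparable_on_u_fun/Fs_alloc.
- exact/comparable_on_sym/comparable_on_u_fun/Fs_alloc.
- exact: comparable_on_refl.
Qed.
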